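(* Let $P$ be a finite set of points in $\mathbb{R}^2$ in general position. Let $(u,v)$ be adjacent vertices of the convex hull of $P$, let $t$ be the other neighbor of $u$ on the hull, and let $p\in A(u)\setminus A(v)$. If $v$ is deleted from $P$, and $v'$ denotes the new neighbor of $u$ on the convex hull of $P\setminus\{v\}$ (replacing $v$), then $p$ lies in the triangle $\triangle(t,u,v')$, i.e. $p$ remains within $u$'s triangle.
   Context: For consecutive hull vertices $(t,u,v)$, $u$'s triangle is $\triangle(t,u,v)$. Convex layers: $L^1$ is the set of vertices of the convex hull of $P$, $L^2$ the set of vertices of the convex hull of $P\setminus L^1$. A point $p$ is active for $u\in L^1$ if, upon deleting $u$ and recomputing the first and second convex layers, $p$ moves to the first layer; $A(u)$ is the set of points active for $u$. *)

From mathcomp Require Import all_boot all_order all_algebra.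
Set Implicit Arguments. Unset Strict Implicit. Unset Printing Implicit Defensive.
Import Order.TTheory GRing.Theory Num.Theory.
Local Open Scope ring_scope.

Definition pt (R : realFieldType) := (R * R)%type.

(* Orientation determinant of (a, b, c): > 0 iff counterclockwise. *)
Definition orient (R : realFieldType) (a b c : pt R) : R :=
  (b.1 - a.1) * (c.2 - a.2) - (b.2 - a.2) * (c.1 - a.1).

Definition general_position (R : realFieldType) (P : seq (pt R)) : Prop :=
  forall a b c, a \in P -> b \in P -> c \in P ->
    a <> b -> b <> c -> a <> c -> orient a b c != 0.

Definition in_conv (R : realFieldType) (A : pt R -> Prop) (p : pt R) : Prop :=
  exists s : seq (pt R), (forall q, q \in s -> A q) /\
  exists w : pt R -> R, (forall q, q \in s -> 0 <= w q) /\
    \sum_(q <- s) w q = 1 /\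
    \sum_(q <- s) w q * q.1 = p.1 /\
    \sum_(q <- s) w q * q.2 = p.2.

Definition hull_vertex (R : realFieldType) (S : pt R -> Prop) (x : pt R) : Prop :=
  S x /\ ~ in_conv (fun y => S y /\ y <> x) x.

Definition L1 (R : realFieldType) (S : pt R -> Prop) (x : pt R) : Prop :=
  hull_vertex S x.
Definition L2 (R : realFieldType) (S : pt R -> Prop) (x : pt R) : Prop :=
  hull_vertex (fun y => S y /\ ~ L1 S y) x.

Definition del (R : realFieldType) (S : pt R -> Prop) (u : pt R) : pt R -> Prop :=
  fun y => S y /\ y <> u.

Definition hull_edge (R : realFieldType) (S : pt R -> Prop) (a b : pt R) : Prop :=
  L1 S a /\ L1 S b /\ a <> b /\
  ((forall q, S q -> q <> a -> q <> b -> 0 < orient a b q) \/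
   (forall q, S q -> q <> a -> q <> b -> orient a b q < 0)).

(* p is active for u: p is on the second layer of S and, after deleting u,
   p is on the first layer.  A S u = set of active points for u. *)
Definition active (R : realFieldType) (S : pt R -> Prop) (u p : pt R) : Prop :=
  L2 S p /\ L1 (del S u) p.

Definition in_triangle (R : realFieldType) (a b c p : pt R) : Prop :=
  in_conv (fun y => y = a \/ y = b \/ y = c) p.

From mathcomp Require Import all_boot all_order all_algebra.
From mathcomp Require Import ring.
From Stdlib Require Import Classical.
Set Implicit Arguments. Unset Strict Implicit. Unset Printing Implicit Defensive.
Import Order.TTheory GRing.Theory Num.Theory.
Local Open Scope ring_scope.

(* Let D = orient t u v'.  All of P lies weakly on the side of line tu given by
   D, and all of P \ {v} weakly on the side of line uv' given by D.  As p is not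
   a hull vertex of P \ {v}, it is a convex combination of other points of
   P \ {v}; splitting off the weight of u gives p = l u + (1 - l) X with X in
   the hull of P \ {u, v, p}, hence in the wedge at u bounded by lines tu and
   uv'.  If p were strictly beyond line v't, it would lie in the triangle t v' X
   and hence in the hull of P \ {u, p}, contradicting that p is a hull vertex
   of P \ {u}.  So p is on u's side of v't as well, i.e. inside t u v'. *)

Lemma big_undup_fibers (I T : eqType) (V : nmodType)
    (s : seq I) (f : I -> T) (G : I -> V) :
  \sum_(q <- undup (map f s)) \sum_(x <- s | f x == q) G x = \sum_(x <- s) G x.
Proof.
under eq_bigr do rewrite big_mkcond.
rewrite exchange_big /= [LHS]big_seq_cond [RHS]big_seq_cond.
apply: eq_bigr => x /andP[xs _].
rewrite -big_mkcond /=.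
rewrite (eq_bigl (pred1 (f x))) => [|q]; last by rewrite /= eq_sym.
by rewrite -big_filter filter_pred1_uniq ?undup_uniq ?mem_undup ?map_f // big_seq1.
Qed.

Section Convexity.
Variable R : realFieldType.
Implicit Types (A B : pt R -> Prop) (a b c p q u : pt R) (s : seq (pt R * R)).

Definition affine (α β γ : R) (q : pt R) : R := α * q.1 + β * q.2 + γ.

Lemma sum_affine s α β γ :
  \sum_(x <- s) x.2 * affine α β γ x.1 =
  α * \sum_(x <- s) x.2 * x.1.1 + β * \sum_(x <- s) x.2 * x.1.2 + γ * \sum_(x <- s) x.2.
Proof.
rewrite !mulr_sumr -!big_split /=; apply: eq_bigr => x _; rewrite /affine; ring.
Qed.

(* Convex combinations are handled as lists of (point, weight) pairs, possibly
   repeating points, and compared through all affine functionals, which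
   determine a point ([affine_inj]) and commute with convex combinations. *)
Definition weights_in A s : Prop := forall x, x \in s -> A x.1 /\ 0 <= x.2.

Lemma in_convP A p :
  in_conv A p <-> exists2 s, weights_in A s &
    forall α β γ, \sum_(x <- s) x.2 * affine α β γ x.1 = affine α β γ p.
Proof.
split.
  move=> [r [rA [w [w0 [w1 [wx wy]]]]]].
  exists [seq (q, w q) | q <- r].
    by move=> x /mapP[q qr ->]; split; [exact: rA | exact: w0].
  by move=> α β γ; rewrite sum_affine !big_map /= w1 wx wy mulr1.
move=> [s sA saff].
have mass : \sum_(x <- s) x.2 = 1.
  by have := saff 0 0 1; rewrite sum_affine /affine !mul0r !add0r !mul1r.
have [mx my] : \sum_(x <- s) x.2 * x.1.1 = p.1 /\ \sum_(x <- s) x.2 * x.1.2 = p.2.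
  split; [have := saff 1 0 0 | have := saff 0 1 0];
  by rewrite sum_affine /affine !mul0r !mul1r ?addr0 ?add0r.
pose w q := \sum_(x <- s | x.1 == q) x.2.
have fibers F : \sum_(q <- undup (map fst s)) w q * F q = \sum_(x <- s) x.2 * F x.1.
  rewrite -[RHS](big_undup_fibers _ fst); apply: eq_bigr => q _.
  by rewrite mulr_suml; apply: eq_bigr => x /eqP->.
exists (undup (map fst s)); split.
  by move=> q; rewrite mem_undup => /mapP[x /sA[]] ? _ ->.
exists w; split.
  move=> q _; rewrite /w big_seq_cond.
  by apply: sumr_ge0 => x /andP[/sA[]].
split; last by rewrite (fibers fst) (fibers snd).
rewrite -mass -(eq_bigr _ (fun x _ => mulr1 x.2)) -(fibers (fun _ => 1)).
by apply: eq_bigr => q _; rewrite mulr1.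
Qed.

Lemma in_conv_mem A p : A p -> in_conv A p.
Proof.
move=> Ap; apply/in_convP; exists [:: (p, 1)] => [x|α β γ].
  by rewrite inE => /eqP->.
by rewrite big_seq1 mul1r.
Qed.

Lemma weights_in_flatten A B s :
    (forall q, B q -> in_conv A q) -> weights_in B s ->
  exists2 r, weights_in A r & forall α β γ,
    \sum_(y <- r) y.2 * affine α β γ y.1 = \sum_(x <- s) x.2 * affine α β γ x.1.
Proof.
move=> BA; elim: s => [|[q c] s IH] sB; first by exists [::].
have [|r rA raff] := IH; first by move=> x xs; apply: sB; rewrite inE xs orbT.
have [/BA /in_convP[rq rqA rqaff] c0] := sB (q, c) (mem_head _ _).
exists ([seq (y.1, c * y.2) | y <- rq] ++ r).
  move=> y; rewrite mem_cat => /orP[/mapP[z /rqA[zA z0] ->]|/rA //].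
  by split; last exact: mulr_ge0.
move=> α β γ; rewrite big_cat big_map big_cons raff -rqaff mulr_sumr.
by congr (_ + _); apply: eq_bigr => y _; rewrite mulrA.
Qed.

Lemma in_conv_trans A B p :
  (forall q, B q -> in_conv A q) -> in_conv B p -> in_conv A p.
Proof.
move=> BA /in_convP[s sB saff]; have [r rA raff] := weights_in_flatten BA sB.
by apply/in_convP; exists r => // α β γ; rewrite raff.
Qed.

Definition mix (l : R) (a b : pt R) : pt R :=
  (l * a.1 + (1 - l) * b.1, l * a.2 + (1 - l) * b.2).

Lemma affine_mix α β γ l a b :
  affine α β γ (mix l a b) = l * affine α β γ a + (1 - l) * affine α β γ b.
Proof. by rewrite /affine /mix /=; ring. Qed.

Lemma affine_inj p q : (forall α β γ, affine α β γ p = affine α β γ q) -> p = q.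
Proof.
move=> pq; rewrite [p]surjective_pairing [q]surjective_pairing.
by move: (pq 1 0 0) (pq 0 1 0); rewrite /affine !mul1r !mul0r !addr0 ?add0r => -> ->.
Qed.

Lemma weights_mass0 A s (F : pt R -> R) :
  weights_in A s -> \sum_(x <- s) x.2 = 0 -> \sum_(x <- s) x.2 * F x.1 = 0.
Proof.
move=> sA; rewrite big_seq_cond => /eqP; rewrite psumr_eq0 => [/allP s0|x /andP[/sA[]]] //.
rewrite big1_seq // => x /andP[_ xs].
by move: (s0 x xs); rewrite xs => /eqP->; rewrite mul0r.
Qed.

Lemma in_conv_split A u p :
    in_conv A p -> p <> u ->
  exists l X, [/\ 0 <= l < 1, in_conv (fun q => A q /\ q <> u) X & p = mix l u X].
Proof.
move=> /in_convP[s sA saff] pu.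
pose s' := [seq x <- s | x.1 != u].
have s'A : weights_in (fun q => A q /\ q <> u) s'.
  by move=> x; rewrite mem_filter => /andP[/eqP xu /sA[]].
pose l := \sum_(x <- s | x.1 == u) x.2; pose M := \sum_(x <- s') x.2.
have l0 : 0 <= l by rewrite /l big_seq_cond; apply: sumr_ge0 => x /andP[/sA[]].
have M0 : 0 <= M by rewrite /M big_seq; apply: sumr_ge0 => x /s'A[].
have aff_p α β γ :
    affine α β γ p = l * affine α β γ u + \sum_(x <- s') x.2 * affine α β γ x.1.
  rewrite -saff (bigID (fun x => x.1 == u)) /= big_filter mulr_suml.
  by congr (_ + _); apply: eq_bigr => x /eqP->.
have M1 : 1 - l = M.
  by have := aff_p 0 0 1; rewrite sum_affine /affine !mul0r !add0r !mul1r mulr1 => ->; rewrite addrC addKr.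
have [M_eq0|M_neq0] := eqVneq M 0.
  have l1 : l = 1 by apply/esym/eqP; rewrite -subr_eq0 M1 M_eq0.
  case: pu; apply: affine_inj => α β γ.
  by rewrite aff_p (weights_mass0 _ s'A M_eq0) addr0 l1 mul1r.
pose X := ((\sum_(x <- s') x.2 * x.1.1) / M, (\sum_(x <- s') x.2 * x.1.2) / M).
have aff_X α β γ : \sum_(x <- s') x.2 / M * affine α β γ x.1 = affine α β γ X.
  under eq_bigr do rewrite mulrAC.
  by rewrite -mulr_suml sum_affine /affine -/M /= !mulrDl -!mulrA mulfV // mulr1.
exists l, X; split.
- by rewrite l0 -subr_gt0 M1 lt_def M_neq0.
- apply/in_convP; exists [seq (x.1, x.2 / M) | x <- s'] => [y|α β γ].
    by move=> /mapP[x /s'A[xA x0] ->]; split=> //; apply: divr_ge0.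
  by rewrite big_map; apply: aff_X.
- apply: affine_inj => α β γ; rewrite affine_mix aff_p M1 -aff_X mulr_sumr.
  by congr (_ + _); apply: eq_bigr => x _; rewrite mulrA mulrCA divff // mulr1.
Qed.

End Convexity.

Section Orientation.
Variable R : realFieldType.
Implicit Types (A : pt R -> Prop) (a b c p q t u w x y X : pt R) (k l : R).

Lemma orient_rot a b c : orient a b c = orient b c a.
Proof. by rewrite /orient; ring. Qed.

Lemma orient_swap a b c : orient a b c = - orient b a c.
Proof. by rewrite /orient; ring. Qed.

Lemma orient_affine a b q :
  orient a b q = affine (a.2 - b.2) (b.1 - a.1) (a.1 * b.2 - a.2 * b.1) q.
Proof. by rewrite /orient /affine; ring. Qed.

Lemma in_conv_halfplane A a b k p :
  (forall q, A q -> 0 <= orient a b q * k) -> in_conv A p -> 0 <= orient a b p * k.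
Proof.
move=> Ak /in_convP[s sA saff]; rewrite orient_affine -saff mulr_suml big_seq.
apply: sumr_ge0 => x /sA[xA x0]; rewrite -mulrA -orient_affine mulr_ge0 //.
exact: Ak.
Qed.

Lemma divr_ge0_scaled (x y k : R) : 0 <= x * k -> 0 < y * k -> 0 <= x / y.
Proof.
move=> xk yk; have k0 : k != 0 by apply: contraTneq yk => ->; rewrite mulr0 ltxx.
have -> : x / y = (x * k) / (y * k) by rewrite invfM mulrACA divff // mulr1.
by rewrite divr_ge0 // ltW.
Qed.

Lemma in_triangle_orient a b c p k :
    0 < orient a b c * k ->
    0 <= orient b c p * k -> 0 <= orient c a p * k -> 0 <= orient a b p * k ->
  in_triangle a b c p.
Proof.
move=> abc bcp cap abp.
have abc0 : orient a b c != 0 by apply: contraTneq abc => ->; rewrite mul0r ltxx.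
apply/in_convP; exists [:: (a, orient b c p / orient a b c);
  (b, orient c a p / orient a b c); (c, orient a b p / orient a b c)].
  move=> x; rewrite !inE => /or3P[] /eqP-> /=.
  - by split; [left | exact: divr_ge0_scaled abc].
  - by split; [right; left | exact: divr_ge0_scaled abc].
  - by split; [right; right | exact: divr_ge0_scaled abc].
move=> α β γ; move: abc0; rewrite !big_cons big_nil /= /affine /orient => abc0.
by field.
Qed.

Lemma in_triangle_mix t u w X l k :
    0 <= l < 1 -> 0 <= orient t u X * k -> 0 <= orient u w X * k ->
    0 <= orient t u w * k -> 0 < orient t w (mix l u X) * k ->
  in_triangle t w X (mix l u X).
Proof.
move=> /andP[l0 l1] tuX uwX tuw twp; set p := mix l u X in twp *.
have twX : (1 - l) * orient t w X = orient t w p + l * orient t u w.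
  by rewrite /p /orient /mix /=; ring.
have wXp : orient w X p = l * orient u w X by rewrite /p /orient /mix /=; ring.
have Xtp : orient X t p = l * orient t u X by rewrite /p /orient /mix /=; ring.
apply: (in_triangle_orient (k := k)); last exact: ltW.
- rewrite -(pmulr_rgt0 _ (_ : 0 < 1 - l)) ?subr_gt0 // mulrA twX mulrDl.
  by apply: (lt_le_trans twp); rewrite lerDl -mulrA mulr_ge0.
- by rewrite wXp -mulrA mulr_ge0.
- by rewrite Xtp -mulrA mulr_ge0.
Qed.

Lemma in_conv_wedge_orient A B t u w p k :
    in_conv A p -> ~ in_conv B p -> p <> u ->
    (forall q, A q -> q <> u -> B q) -> B t -> B w ->
    (forall q, A q -> 0 <= orient t u q * k) ->
    (forall q, A q -> 0 <= orient u w q * k) ->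
    0 <= orient t u w * k ->
  0 <= orient w t p * k.
Proof.
move=> Ap nBp pu AB Bt Bw tuA uwA tuw; rewrite leNgt; apply/negP => wtp.
apply: nBp; have [l [X [l01 AX pE]]] := in_conv_split Ap pu; subst p.
have tri : in_triangle t w X (mix l u X).
  apply: (in_triangle_mix (k := k)) => //.
  - by apply: in_conv_halfplane AX => q [/tuA].
  - by apply: in_conv_halfplane AX => q [/uwA].
  - by rewrite orient_swap mulNr oppr_gt0.
apply: in_conv_trans tri => q [->|[->|->]]; try exact: in_conv_mem.
by apply: in_conv_trans AX => y [Ay yu]; apply/in_conv_mem/AB.
Qed.

Lemma not_hull_vertex_in_conv (S : pt R -> Prop) x :
  S x -> ~ hull_vertex S x -> in_conv (del S x) x.
Proof. by move=> Sx nx; apply: NNPP => nconv; apply: nx. Qed.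

Lemma hull_edge_side (S : pt R -> Prop) a b c q :
    hull_edge S a b -> S c -> c <> a -> c <> b -> S q -> q <> a -> q <> b ->
  0 < orient a b q * orient a b c.
Proof.
by move=> [_ [_ [_ [side|side]]]] Sc ca cb Sq qa qb;
  [rewrite mulr_gt0 ?side | rewrite nmulr_rgt0 ?side].
Qed.

Lemma hull_edge_side_ge0 (S : pt R -> Prop) a b c q :
    hull_edge S a b -> S c -> c <> a -> c <> b -> S q ->
  0 <= orient a b q * orient a b c.
Proof.
move=> ab Sc ca cb Sq.
have [->|/eqP qa] := eqVneq q a.
  by rewrite (_ : orient a b a = 0) ?mul0r // /orient; ring.
have [->|/eqP qb] := eqVneq q b.
  by rewrite (_ : orient a b b = 0) ?mul0r // /orient; ring.
exact/ltW/(hull_edge_side ab).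
Qed.
End Orientation.

Theorem lemma2 (R : realFieldType) (P : seq (pt R)) (t u v v' p : pt R) :
  uniq P ->
  general_position P ->
  hull_edge (fun x => x \in P) u v ->
  hull_edge (fun x => x \in P) t u ->
  t <> v ->
  active (fun x => x \in P) u p ->
  ~ active (fun x => x \in P) v p ->
  hull_edge (del (fun x => x \in P) v) u v' ->
  v' <> t ->
  in_triangle t u v' p.
Proof.
move=> _ _ [_ [v_L1 _]] tu tv [p_L2 p_L1u] p_nactv uv' v't.
have [t_L1 [u_L1 [tu_neq _]]] := tu; have [_ [v'_L1 [uv'_neq _]]] := uv'.
have [[pP p_nL1] _] := p_L2; have [[v'P _] _] := v'_L1.
have p_nL1v : ~ L1 (del (fun x => x \in P) v) p by move=> pL1; apply: p_nactv.
have [tp pu pv v'p] : [/\ t <> p, p <> u, p <> v & v' <> p].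
  by split=> pE; [apply: p_nL1; rewrite -pE | apply: p_nL1; rewrite pE
    | apply: p_nL1; rewrite pE | apply: p_nL1v; rewrite -pE].
pose D := orient t u v'.
have DD : 0 < D * D by apply: (hull_edge_side tu) => // e; apply: uv'_neq.
have tu_side q : q \in P -> 0 <= orient t u q * D.
  by apply: (hull_edge_side_ge0 tu) => // e; apply: uv'_neq.
have uv'_side q : del (fun x => x \in P) v q -> 0 <= orient u v' q * D.
  rewrite /D (orient_rot t); apply: (hull_edge_side_ge0 uv') => //.
  - by split=> //; apply: t_L1.1.
  - by move=> e; apply: v't.
have v't_side : 0 <= orient v' t p * D.
  apply: (in_conv_wedge_orient (u := u) (A := del (del (fun x => x \in P) v) p)
    (B := del (del (fun x => x \in P) u) p)) => //.
  - exact: (not_hull_vertex_in_conv (conj pP pv)).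
  - exact: p_L1u.2.
  - by move=> q [[qP _] qp] qu.
  - by split; first split; [apply: t_L1.1 | apply: tu_neq |].
  - by split; first split; [| move=> e; apply: uv'_neq |].
  - by move=> q [[/tu_side]].
  - by move=> q [/uv'_side].
  - exact: ltW.
apply: (in_triangle_orient (k := D)) => //; last exact: tu_side.
exact: uv'_side.
Qed.
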